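(* For every integer $n\geq 1$, \[ (n+1)^{n-1}=\sum_{T}\frac{n!}{2^n}\prod_{v\in T}\left(1+\frac{1}{h(v)}\right), \] where the sum ranges over all (unlabeled) binary trees $T$ with $n$ vertices.
   Context: A binary tree is a rooted tree in which each vertex has a left subtree and a right subtree, each possibly empty; binary trees differing in whether a child is a left or a right child are distinct. For a vertex $v$ of a binary tree $T$, the hook length $h(v)$ is the number of descendants of $v$ in $T$, including $v$ itself. *)

From HB Require Import structures.
From mathcomp Require Import all_boot all_order all_algebra.
Set Implicit Arguments. Unset Strict Implicit. Unset Printing Implicit Defensive.
Import Order.TTheory GRing.Theory Num.Theory.

Inductive bintree : Type :=
| Leaf : bintree                    (* the empty tree *)
| Node : bintree -> bintree -> bintree.

Fixpoint bt_eqb (s t : bintree) : bool :=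
  match s, t with
  | Leaf, Leaf => true
  | Node l1 r1, Node l2 r2 => bt_eqb l1 l2 && bt_eqb r1 r2
  | _, _ => false
  end.

Lemma bt_eqbP : Equality.axiom bt_eqb.
Proof.
elim=> [|l1 IHl r1 IHr] [|l2 r2] /=; try by constructor.
apply: (iffP andP) => [[/IHl -> /IHr ->]|[<- <-]] //.
by split; [apply/IHl|apply/IHr].
Qed.

HB.instance Definition _ := hasDecEq.Build bintree bt_eqbP.

Fixpoint bt_size (t : bintree) : nat :=
  match t with
  | Leaf => 0
  | Node l r => (bt_size l + bt_size r).+1
  end.

(* hook lengths: the multiset of h(v) over the vertices v of t,
   h(v) = number of descendants of v (including v) = size of subtree at v *)
Fixpoint hooks (t : bintree) : seq nat :=
  match t with
  | Leaf => [::]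
  | Node l r => bt_size t :: (hooks l ++ hooks r)
  end.

Local Open Scope ring_scope.

Definition hook_prod (t : bintree) : rat :=
  \prod_(h <- hooks t) (1 + (h%:R)^-1).

(* Both sides are computed by the same recursion.  Splitting a binary tree
   with n + 1 vertices at its root, the hook product factors as
   (1 + 1/(n+1)) times the hook products of the two subtrees, so the sum
   F n of the hook products over trees with n vertices satisfies
   F (n+1) = (n+2)/(n+1) * sum_i F i * F (n-i).  The closed form
   F n = 2^n (n+1)^(n-1) / n! satisfies the same recursion because of the
   convolution sum_k C(m,k) (k+1)^(k-1) (m-k+1)^(m-k-1) = 2 (m+2)^(m-1),
   an instance of Abel's generalisation of the binomial theorem.  Abel's
   identity is proved on polynomials: both sides have the same derivative
   (by induction) and agree at one point, where the left-hand side is an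
   alternating binomial sum, i.e. a finite difference of too high an order. *)

From mathcomp Require Import all_boot all_order all_algebra ring lra.
Set Implicit Arguments.
Unset Strict Implicit.
Unset Printing Implicit Defensive.
Import GRing.Theory Num.Theory.
Local Open Scope ring_scope.

Lemma signr_subn (R : pzRingType) (m k : nat) :
  (k <= m)%N -> (-1) ^+ (m - k) = (-1) ^+ m * (-1) ^+ k :> R.
Proof.
move=> le_km; rewrite -{2}(subnK le_km) exprD -mulrA -exprD addnn -mul2n.
by rewrite exprM sqrrN expr1n expr1n mulr1.
Qed.

Section AlternatingBinomialSums.
Variable R : comPzRingType.

Lemma alt_binom_sumS (m : nat) (f : nat -> R) :
  \sum_(k < m.+2) (-1) ^+ k * 'C(m.+1, k)%:R * f k =
  \sum_(k < m.+1) (-1) ^+ k * 'C(m, k)%:R * (f k - f k.+1).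
Proof.
rewrite big_ord_recl /= bin0 expr0 !mul1r.
under eq_bigr => i _ do rewrite /bump /= add1n binS natrD mulrDr mulrDl.
rewrite big_split /= addrA.
have -> : f 0%N + \sum_(i < m.+1) (-1) ^+ i.+1 * 'C(m, i.+1)%:R * f i.+1
    = \sum_(k < m.+1) (-1) ^+ k * 'C(m, k)%:R * f k.
  rewrite [RHS]big_ord_recl /= bin0 expr0 !mul1r; congr (_ + _).
  rewrite big_ord_recr /= bin_small // mulr0 mul0r addr0.
  by apply: eq_bigr => i _; rewrite /bump /= add1n.
by rewrite -big_split; apply: eq_bigr => i _ /=; rewrite exprS; ring.
Qed.

Lemma alt_binom_sum_exp_eq0 (m j : nat) (x : R) : (j < m)%N ->
  \sum_(k < m.+1) (-1) ^+ k * 'C(m, k)%:R * (x + k%:R) ^+ j = 0.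
Proof.
elim: m j => [|m IHm] j // lt_jm.
have diff_exp k : (x + k%:R) ^+ j - (x + k.+1%:R) ^+ j =
    - \sum_(i < j) 'C(j, i)%:R * (x + k%:R) ^+ i.
  rewrite -natr1 addrA exprD1n big_ord_recr /= binn mulr1n opprD addrCA subrr.
  by rewrite addr0; congr (- _); apply: eq_bigr => i _; rewrite mulr_natl.
rewrite (alt_binom_sumS m (fun k => (x + k%:R) ^+ j)).
under eq_bigr => k _ do rewrite diff_exp mulrN mulr_sumr.
rewrite sumrN exchange_big big1 ?oppr0 // => i _ /=.
transitivity ('C(j, i)%:R *
    \sum_(k < m.+1) (-1) ^+ k * 'C(m, k)%:R * (x + k%:R) ^+ i).
  by rewrite mulr_sumr; apply: eq_bigr => k _; ring.
by rewrite IHm ?mulr0 // (leq_trans (ltn_ord i)).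
Qed.

End AlternatingBinomialSums.

Definition abel_coef (n k : nat) : nat := 'C(n, k) * k.+1 ^ k.-1.

Lemma abel_coefS_subn (n k : nat) :
  (abel_coef n.+1 k * (n.+1 - k) = n.+1 * abel_coef n k)%N.
Proof. by rewrite /abel_coef mulnAC (mulnC 'C(n.+1, k)) -mul_bin_down mulnA. Qed.

Lemma expn_pred_subn (k m : nat) : (k <= m.+1)%N ->
  (k.+1 ^ k.-1 * k.+1 ^ (m.+1 - k) = k.+1 ^ m)%N.
Proof. by case: k => [|k] le_km; rewrite ?exp1n // -expnD subnKC. Qed.

Section AbelIdentity.
Variable R : numDomainType.

Lemma deriv_XaddC_exp (a : R) (m : nat) :
  (('X + a%:P) ^+ m)^`() = ('X + a%:P) ^+ m.-1 *+ m.
Proof. by rewrite deriv_exp derivD derivX derivC addr0 mul1r. Qed.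

Lemma deriv_eq0_const (p : {poly R}) (a : R) : p^`() = 0 -> p = (p.[a])%:P.
Proof.
move=> p'0; suff -> : p = (p`_0)%:P by rewrite hornerC.
apply/polyP => -[|i]; rewrite coefC //=.
by have /eqP := coef_deriv p i; rewrite p'0 coef0 eq_sym mulrn_eq0 => /eqP.
Qed.

Definition abel_poly (n : nat) (c : R) : {poly R} :=
  \sum_(k < n.+1) (abel_coef n k)%:R *: ('X + (c + (n - k)%:R)%:P) ^+ (n - k).

Lemma deriv_abel_poly (n : nat) (c : R) :
  (abel_poly n.+1 c)^`() = abel_poly n (c + 1) *+ n.+1.
Proof.
rewrite /abel_poly raddf_sum big_ord_recr /= subnn expr0 derivZ derivC.
rewrite scaler0 addr0 -sumrMnl; apply: eq_bigr => k _.
have le_kn : (k <= n)%N by rewrite -ltnS.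
rewrite derivZ deriv_XaddC_exp -scalerMnr !scalerMnl -!mulrnA abel_coefS_subn.
by rewrite mulnC subSn //= -natr1 addrA addrAC.
Qed.

Lemma abel_poly_root (n : nat) (c : R) : (abel_poly n.+1 c).[- (c + n.+2%:R)] = 0.
Proof.
rewrite /abel_poly horner_sum.
transitivity ((-1 : R) ^+ n.+1 *
    \sum_(k < n.+2) (-1) ^+ k * 'C(n.+1, k)%:R * (1 + k%:R) ^+ n).
  rewrite mulr_sumr; apply: eq_bigr => k _.
  have le_kn : (k <= n.+1)%N by rewrite -ltnS.
  rewrite hornerZ horner_exp hornerD hornerX hornerC.
  have -> : - (c + n.+2%:R) + (c + (n.+1 - k)%:R) = - k.+1%:R :> R.
    by rewrite natrB // -!natr1; ring.
  rewrite (exprNn k.+1%:R) signr_subn // [1 + _]addrC natr1.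
  have -> : k.+1%:R ^+ n = k.+1%:R ^+ k.-1 * k.+1%:R ^+ (n.+1 - k) :> R.
    by rewrite -!natrX -natrM expn_pred_subn.
  by rewrite /abel_coef natrM natrX; ring.
by rewrite alt_binom_sum_exp_eq0 ?mulr0.
Qed.

Lemma abel_polyE (n : nat) (c : R) : abel_poly n c = ('X + (c + n.+1%:R)%:P) ^+ n.
Proof.
elim: n c => [|n IHn] c; first by rewrite /abel_poly big_ord1 expr0 scale1r.
apply/eqP; rewrite -subr_eq0; set d := _ - _; apply/eqP.
have d'0 : d^`() = 0.
  rewrite /d derivB deriv_abel_poly deriv_XaddC_exp IHn /=.
  by rewrite -addrA -[n.+2%:R]natr1 [1 + _]addrC subrr.
rewrite (deriv_eq0_const (- (c + n.+2%:R)) d'0) /d hornerD hornerN abel_poly_root.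
by rewrite horner_exp hornerD hornerX hornerC addNr expr0n subrr.
Qed.

Lemma abel_identity (n : nat) (x : R) :
  \sum_(k < n.+1) (abel_coef n k)%:R * (x + (n - k)%:R) ^+ (n - k) =
  (x + n.+1%:R) ^+ n.
Proof.
have /(congr1 (horner^~ 0)) := abel_polyE n x.
rewrite /abel_poly horner_sum horner_exp hornerD hornerX hornerC add0r => <-.
by apply: eq_bigr => k _; rewrite hornerZ horner_exp hornerD hornerX hornerC add0r.
Qed.

End AbelIdentity.

Lemma abel_identity_nat (n x : nat) :
  (\sum_(k < n.+1) abel_coef n k * (x + (n - k)) ^ (n - k) = (x + n.+1) ^ n)%N.
Proof.
apply/eqP; rewrite -(eqr_nat rat) natr_sum natrX natrD -abel_identity.
by apply/eqP/eq_bigr => k _; rewrite natrM natrX natrD.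
Qed.

Lemma abel_convolution (m : nat) :
  ((\sum_(k < m.+1) abel_coef m k * (m - k).+1 ^ (m - k).-1) * m.+2
    = 2 * m.+2 ^ m)%N.
Proof.
case: m => [|m]; first by rewrite big_ord1.
set S := (\sum_(k < _) _)%N.
have expS_pred j : (j.+1 ^ j = j.+1 ^ j.-1 + j * j.+1 ^ j.-1)%N.
  by case: j => // j; rewrite -mulSn expnS.
have shift : (S + m.+1 * m.+3 ^ m = m.+3 ^ m.+1)%N.
  have := abel_identity_nat m.+1 1; rewrite add1n => <-.
  under [in RHS]eq_bigr => k _ do rewrite add1n expS_pred mulnDr.
  rewrite big_split /=; congr (_ + _).
  rewrite -(abel_identity_nat m 2) big_distrr [RHS]big_ord_recr /= subnn mul0n.
  rewrite muln0 addn0; apply: eq_bigr => k _.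
  rewrite [RHS]mulnA abel_coefS_subn -mulnA subSn /=; last exact: ltn_ord k.
  by rewrite add2n.
have {shift} : (S + m.+1 * m.+3 ^ m = 2 * m.+3 ^ m + m.+1 * m.+3 ^ m)%N.
  by rewrite shift -mulnDl add2n expnS.
by move/addIn ->; rewrite expnS mulnCA mulnC.
Qed.

Definition hook_sum (n : nat) : rat := (2 ^ n * n.+1 ^ n.-1)%N%:R / n`!%:R.

Lemma natr_fact_neq0 (n : nat) : n`!%:R != 0 :> rat.
Proof. by rewrite pnatr_eq0 -lt0n fact_gt0. Qed.

Lemma hook_sum_mul (m i : nat) : (i <= m)%N ->
  hook_sum i * hook_sum (m - i) =
  (2 ^ m)%N%:R / m`!%:R * (abel_coef m i * (m - i).+1 ^ (m - i).-1)%N%:R.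
Proof.
move=> le_im; rewrite /hook_sum /abel_coef -(bin_fact le_im) -(subnKC le_im).
rewrite addKn expnD !natrM.
have bin_neq0 : 'C(i + (m - i), i)%:R != 0 :> rat.
  by rewrite pnatr_eq0 -lt0n bin_gt0 leq_addr.
by field; rewrite bin_neq0 !natr_fact_neq0.
Qed.

Lemma hook_sumS (m : nat) :
  hook_sum m.+1 = (1 + m.+1%:R^-1) * \sum_(i < m.+1) hook_sum i * hook_sum (m - i).
Proof.
set S := (\sum_(k < m.+1) abel_coef m k * (m - k).+1 ^ (m - k).-1)%N.
have -> : \sum_(i < m.+1) hook_sum i * hook_sum (m - i) =
    (2 ^ m)%N%:R / m`!%:R * S%:R.
  rewrite natr_sum mulr_sumr; apply: eq_bigr => i _.
  by rewrite hook_sum_mul // -ltnS.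
have /(congr1 (GRing.natmul (1 : rat))) := abel_convolution m.
rewrite -/S !natrM natrX => conv.
have m2_neq0 : m.+2%:R != 0 :> rat by rewrite pnatr_eq0.
rewrite -[S%:R](mulfK m2_neq0) conv /hook_sum factS /= !natrM !natrX exprS; field.
have m_ge0 : 0 <= m%:R :> rat by [].
by rewrite natr_fact_neq0 !lt0r_neq0 //; lra.
Qed.

(* [fuel] only bounds the recursion: the list is complete when [n < fuel]. *)
Fixpoint bintrees_fuel (fuel n : nat) : seq bintree :=
  if fuel is fuel'.+1 then
    if n is m.+1 then
      [seq t | i <- iota 0 n,
               t <- [seq Node l r | l <- bintrees_fuel fuel' i,
                                    r <- bintrees_fuel fuel' (m - i)]]
    else [:: Leaf]
  else [::].

Lemma mem_bintrees_fuel (fuel n : nat) (t : bintree) : (n < fuel)%N ->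
  (t \in bintrees_fuel fuel n) = (bt_size t == n).
Proof.
elim: fuel n t => [|fuel IHfuel] [|m] t; rewrite ?ltn0 ?ltnS // => lt_m_fuel.
  by case: t.
have lt_fuel i : (i <= m)%N -> (i < fuel)%N /\ (m - i < fuel)%N.
  by move=> le_im; rewrite !(leq_ltn_trans _ lt_m_fuel) ?leq_subr.
apply/allpairsPdep/idP => [[i [_ [+ /allpairsP[[l r] [+ + ->]]]] ->]|].
  rewrite mem_iota ltnS => /andP[_ le_im]; have [lt_i lt_mi] := lt_fuel i le_im.
  by rewrite !IHfuel // => /eqP /= size_l /eqP size_r; rewrite size_l size_r subnKC.
case: t => [|l r] // /eqP[size_lr].
have [lt_l lt_r] : (bt_size l < fuel)%N /\ (m - bt_size l < fuel)%N.
  by apply: lt_fuel; rewrite -size_lr leq_addr.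
exists (bt_size l), (Node l r); split => //.
  by rewrite mem_iota ltnS -size_lr leq_addr.
by apply/allpairsP; exists (l, r); rewrite !IHfuel // -size_lr addKn.
Qed.

Lemma bintrees_fuel_uniq (fuel n : nat) : (n < fuel)%N -> uniq (bintrees_fuel fuel n).
Proof.
elim: fuel n => [|fuel IHfuel] [|m]; rewrite ?ltn0 ?ltnS // => lt_m_fuel.
have left_size i t : (i <= m)%N ->
    t \in [seq Node l r | l <- bintrees_fuel fuel i, r <- bintrees_fuel fuel (m - i)] ->
    (if t is Node l _ then bt_size l else 0%N) = i.
  move=> le_im /allpairsP[[l r] [+ _ ->]].
  by rewrite mem_bintrees_fuel ?(leq_ltn_trans le_im) // => /eqP.
apply: allpairs_uniq_dep => [|i|].
- exact: iota_uniq.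
- rewrite mem_iota ltnS => /andP[_ le_im].
  apply: allpairs_uniq; rewrite ?IHfuel ?(leq_ltn_trans _ lt_m_fuel) ?leq_subr //.
  by move=> [l r] [l' r'] _ _ [-> ->].
move=> _ _ /allpairsPdep[i [t [+ t_in ->]]] /allpairsPdep[i' [t' [+ t'_in ->]]].
rewrite !mem_iota !ltnS => /andP[_ le_im] /andP[_ le_i'm] /= eq_tt'.
by rewrite -(left_size i t) // -(left_size i' t') // eq_tt'.
Qed.

Lemma hook_prod_Node (l r : bintree) :
  hook_prod (Node l r) = (1 + (bt_size (Node l r))%:R^-1) * (hook_prod l * hook_prod r).
Proof. by rewrite /hook_prod /= big_cons big_cat. Qed.

Lemma sum_hook_prod_fuel (fuel n : nat) : (n < fuel)%N ->
  \sum_(t <- bintrees_fuel fuel n) hook_prod t = hook_sum n.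
Proof.
elim: fuel n => [|fuel IHfuel] [|m]; rewrite ?ltn0 ?ltnS // => lt_m_fuel.
  by rewrite big_seq1 /hook_prod /hook_sum big_nil divr1.
rewrite big_allpairs_dep hook_sumS mulr_sumr -{1}(subn0 m.+1) -/(index_iota 0 m.+1).
rewrite big_mkord; apply: eq_bigr => i _; have le_im : (i <= m)%N by rewrite -ltnS.
have [lt_i lt_mi] : (i < fuel)%N /\ (m - i < fuel)%N.
  by rewrite !(leq_ltn_trans _ lt_m_fuel) ?leq_subr.
rewrite big_allpairs_dep -(IHfuel i) // -(IHfuel (m - i)%N) // big_distrlr mulr_sumr.
apply: eq_big_seq => l; rewrite mem_bintrees_fuel // => /eqP size_l.
rewrite mulr_sumr; apply: eq_big_seq => r; rewrite mem_bintrees_fuel // => /eqP size_r.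
by rewrite hook_prod_Node /= size_l size_r subnKC.
Qed.

Lemma sum_hook_prod (n : nat) (s : seq bintree) :
  uniq s -> (forall t, (t \in s) = (bt_size t == n)) ->
  \sum_(t <- s) hook_prod t = hook_sum n.
Proof.
move=> s_uniq mem_s; rewrite (perm_big (bintrees_fuel n.+1 n)).
  exact: sum_hook_prod_fuel.
apply: uniq_perm => //; first exact: bintrees_fuel_uniq.
by move=> t; rewrite mem_s mem_bintrees_fuel.
Qed.

(* The identity also holds for n = 0. *)
Theorem theorem1 (n : nat) (s : seq bintree) :
  (1 <= n)%N ->
  uniq s ->
  (forall t : bintree, (t \in s) = (bt_size t == n)) ->
  ((n.+1 ^ n.-1)%N%:R : rat)
    = \sum_(t <- s) ((n`!)%:R / (2 ^ n)%N%:R) * hook_prod t.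
Proof.
move=> _ s_uniq mem_s; rewrite -mulr_sumr (sum_hook_prod s_uniq mem_s) /hook_sum natrM.
have two_exp_neq0 : (2 ^ n)%N%:R != 0 :> rat by rewrite pnatr_eq0 expn_eq0.
by field; rewrite natr_fact_neq0.
Qed.
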